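(* Let $N(T)$ be a $C^0$ net on a grid $T$ having the BMSDD property with constant $L$. Then the piecewise Coons patch $\mathcal{C}(N):\mathbb{R}^2\to\mathbb{R}^m$ has the BMSDD property with constant $3L$ in $\mathbb{R}^2$.
   Context: For strictly increasing bi-infinite real sequences $(s_i)$, $(t_j)$, unbounded above and below, the grid is $T=\bigcup_i\{s_i\}\times\mathbb{R}\cup\bigcup_j\mathbb{R}\times\{t_j\}$. A net $N(T)$ is a function on $T$ with values in $\mathbb{R}^m$; it is $C^0$ if all u-functions $s\mapsto N(s,t_j)$, $t\mapsto N(s_i,t)$ are continuous. The piecewise Coons patch is defined on each rectangle $[s_i,s_{i+1}]\times[t_j,t_{j+1}]$, with $h_1=s_{i+1}-s_i$, $h_2=t_{j+1}-t_j$, by $\mathcal{C}(N)(s,t)=\frac{s_{i+1}-s}{h_1}N(s_i,t)+\frac{s-s_i}{h_1}N(s_{i+1},t)+\frac{t_{j+1}-t}{h_2}N(s,t_j)+\frac{t-t_j}{h_2}N(s,t_{j+1})-B(s,t)$, with $B(s,t)=\frac{s_{i+1}-s}{h_1}\big(\frac{t_{j+1}-t}{h_2}N(s_i,t_j)+\frac{t-t_j}{h_2}N(s_i,t_{j+1})\big)+\frac{s-s_i}{h_1}\big(\frac{t_{j+1}-t}{h_2}N(s_{i+1},t_j)+\frac{t-t_j}{h_2}N(s_{i+1},t_{j+1})\big)$. For $\sigma_1\ne\sigma_2$, $\tau_1\ne\tau_2$, $[\sigma_1,\sigma_2;\tau_1,\tau_2]G=\frac{G(\sigma_1,\tau_1)+G(\sigma_2,\tau_2)-G(\sigma_2,\tau_1)-G(\sigma_1,\tau_2)}{(\sigma_1-\sigma_2)(\tau_1-\tau_2)}$.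 A net $N(T)$ has the BMSDD property with constant $L$ if $\|[\sigma_1,\sigma_2;\tau_1,\tau_2]N\|_\infty\le L$ whenever all four points $(\sigma_i,\tau_j)$ lie in $T$; a function $G$ on $\mathbb{R}^2$ has the BMSDD property with constant $L$ in $\mathbb{R}^2$ if this bound holds for all $\sigma_1\ne\sigma_2$, $\tau_1\ne\tau_2$. *)

From Stdlib Require Import Reals ZArith.
Open Scope R_scope.

(* Vectors of R^m are represented as functions nat -> R, of which only the
   coordinates k < m are relevant. *)
Definition vecR := nat -> R.

Definition supnorm_le (m : nat) (v : vecR) (L : R) : Prop :=
  forall k : nat, (k < m)%nat -> Rabs (v k) <= L.

Definition grid_seq (s : Z -> R) : Prop :=
  (forall i j : Z, (i < j)%Z -> s i < s j) /\
  (forall M : R, exists i : Z, M < s i) /\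
  (forall M : R, exists i : Z, s i < M).

Definition onT (s t : Z -> R) (x y : R) : Prop :=
  (exists i : Z, x = s i) \/ (exists j : Z, y = t j).

(* A net is a function R -> R -> R^m, of which only the values on T matter. *)
Definition net := R -> R -> vecR.

Definition net_C0 (m : nat) (s t : Z -> R) (N : net) : Prop :=
  (forall (j : Z) (k : nat), (k < m)%nat -> continuity (fun x => N x (t j) k)) /\
  (forall (i : Z) (k : nat), (k < m)%nat -> continuity (fun y => N (s i) y k)).

Definition divdiff (G : net) (s1 s2 t1 t2 : R) : vecR :=
  fun k => (G s1 t1 k + G s2 t2 k - G s2 t1 k - G s1 t2 k) / ((s1 - s2) * (t1 - t2)).

Definition BMSDD_net (m : nat) (s t : Z -> R) (N : net) (L : R) : Prop :=
  forall s1 s2 t1 t2 : R, s1 <> s2 -> t1 <> t2 ->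
    onT s t s1 t1 -> onT s t s1 t2 -> onT s t s2 t1 -> onT s t s2 t2 ->
    supnorm_le m (divdiff N s1 s2 t1 t2) L.

Definition BMSDD_R2 (m : nat) (G : net) (L : R) : Prop :=
  forall s1 s2 t1 t2 : R, s1 <> s2 -> t1 <> t2 ->
    supnorm_le m (divdiff G s1 s2 t1 t2) L.

Definition coons_cell (s t : Z -> R) (N : net) (i j : Z) (x y : R) : vecR :=
  let h1 := s (i + 1)%Z - s i in
  let h2 := t (j + 1)%Z - t j in
  let a0 := (s (i + 1)%Z - x) / h1 in
  let a1 := (x - s i) / h1 in
  let b0 := (t (j + 1)%Z - y) / h2 in
  let b1 := (y - t j) / h2 in
  fun k =>
    a0 * N (s i) y k + a1 * N (s (i + 1)%Z) y k
    + b0 * N x (t j) k + b1 * N x (t (j + 1)%Z) k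
    - (a0 * (b0 * N (s i) (t j) k + b1 * N (s i) (t (j + 1)%Z) k)
       + a1 * (b0 * N (s (i + 1)%Z) (t j) k + b1 * N (s (i + 1)%Z) (t (j + 1)%Z) k)).

(* G is the piecewise Coons patch C(N): on every closed cell it is given by the
   cell formula (the cell formulas agree on shared edges, so this determines G). *)
Definition is_coons_patch (s t : Z -> R) (N : net) (G : net) : Prop :=
  forall (i j : Z) (x y : R),
    s i <= x <= s (i + 1)%Z -> t j <= y <= t (j + 1)%Z ->
    forall k : nat, G x y k = coons_cell s t N i j x y k.

(* On one cell [s_i, s_{i+1}] x [t_j, t_{j+1}], the Coons patch is bilinearly blended,
   and its mixed difference over any sub-rectangle [a, b] x [c, d] is exactly
   (b - a)(d - c) ([s_i, s_{i+1}; c, d]N + [a, b; t_j, t_{j+1}]N - [s_i, s_{i+1}; t_j, t_{j+1}]N).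
   All three are divided differences of N over points of T, so the mixed difference is at
   most 3L times the area.  Mixed differences are additive when a rectangle is cut along
   a vertical or horizontal line, so cutting an arbitrary rectangle along the grid lines
   extends the bound 3L * area from cells to the whole plane. *)
From Stdlib Require Import Reals ZArith Lra Lia.
Open Scope R_scope.

Definition mixed_diff (F : R -> R -> R) (a b c d : R) : R :=
  F a c + F b d - F b c - F a d.

Lemma mixed_diff_split_x (F : R -> R -> R) (a b e c d : R) :
  mixed_diff F a e c d = mixed_diff F a b c d + mixed_diff F b e c d.
Proof. unfold mixed_diff; ring. Qed.

Lemma mixed_diff_split_y (F : R -> R -> R) (a b c d e : R) :
  mixed_diff F a b c e = mixed_diff F a b c d + mixed_diff F a b d e.
Proof. unfold mixed_diff; ring. Qed.

Lemma mixed_diff_swap_x (F : R -> R -> R) (a b c d : R) :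
  mixed_diff F b a c d = - mixed_diff F a b c d.
Proof. unfold mixed_diff; ring. Qed.

Lemma mixed_diff_swap_y (F : R -> R -> R) (a b c d : R) :
  mixed_diff F a b d c = - mixed_diff F a b c d.
Proof. unfold mixed_diff; ring. Qed.

Lemma divdiff_mixed_diff (G : net) (s1 s2 t1 t2 : R) (k : nat) :
  divdiff G s1 s2 t1 t2 k
  = mixed_diff (fun x y => G x y k) s1 s2 t1 t2 / ((s1 - s2) * (t1 - t2)).
Proof. reflexivity. Qed.

Section GridInduction.

Variables (s : Z -> R) (Q : R -> R -> Prop).

Hypothesis Q_trans : forall a b c, a <= b -> b <= c -> Q a b -> Q b c -> Q a c.
Hypothesis Q_cell : forall i a b, s i <= a -> a <= b -> b <= s (i + 1)%Z -> Q a b.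

Lemma grid_chain_ind (n : nat) : forall i a b,
  s i <= a -> a <= b -> b <= s (i + Z.of_nat n + 1)%Z -> Q a b.
Proof.
  induction n as [|n IH]; intros i a b Hia Hab Hb.
  - apply (Q_cell i); trivial. now replace (i + 1)%Z with (i + Z.of_nat 0 + 1)%Z by lia.
  - assert (Hb' : b <= s (i + 1 + Z.of_nat n + 1)%Z)
      by now replace (i + 1 + Z.of_nat n + 1)%Z with (i + Z.of_nat (S n) + 1)%Z by lia.
    destruct (Rle_dec (s (i + 1)%Z) a) as [Ha | Ha].
    + now apply (IH (i + 1)%Z).
    + destruct (Rle_dec b (s (i + 1)%Z)) as [Hb1 | Hb1].
      * now apply (Q_cell i).
      * apply Q_trans with (s (i + 1)%Z); try lra.
        -- apply (Q_cell i); lra.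
        -- apply (IH (i + 1)%Z); lra.
Qed.

Lemma grid_seq_bracket : grid_seq s ->
  forall a b, a <= b -> exists i n, s i <= a /\ b <= s (i + Z.of_nat n + 1)%Z.
Proof.
  intros [s_incr [s_unbounded_up s_unbounded_down]] a b Hab.
  destruct (s_unbounded_down a) as [i Hi], (s_unbounded_up b) as [j Hj].
  assert (Hij : (i < j)%Z).
  { destruct (Z_lt_le_dec i j) as [| Hji]; trivial.
    destruct (Z.eq_dec j i) as [-> | Hne]; [lra |].
    assert (s j < s i) by (apply s_incr; lia). lra. }
  exists i, (Z.to_nat (j - i - 1)). split; [lra |].
  replace (i + Z.of_nat (Z.to_nat (j - i - 1)) + 1)%Z with j by lia; lra.
Qed.

Lemma grid_subdivision_ind : grid_seq s -> forall a b, a <= b -> Q a b.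
Proof.
  intros Hs a b Hab.
  destruct (grid_seq_bracket Hs a b Hab) as (i & n & Hia & Hbn).
  exact (grid_chain_ind n i a b Hia Hab Hbn).
Qed.

End GridInduction.

Definition mixed_diff_bounded (F : R -> R -> R) (K a b c d : R) : Prop :=
  Rabs (mixed_diff F a b c d) <= K * ((b - a) * (d - c)).

Lemma mixed_diff_bounded_concat_x (F : R -> R -> R) (K a b e c d : R) :
  mixed_diff_bounded F K a b c d -> mixed_diff_bounded F K b e c d ->
  mixed_diff_bounded F K a e c d.
Proof.
  unfold mixed_diff_bounded; intros Hab Hbe.
  rewrite (mixed_diff_split_x F a b e).
  eapply Rle_trans; [apply Rabs_triang | lra].
Qed.

Lemma mixed_diff_bounded_concat_y (F : R -> R -> R) (K a b c d e : R) :
  mixed_diff_bounded F K a b c d -> mixed_diff_bounded F K a b d e ->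
  mixed_diff_bounded F K a b c e.
Proof.
  unfold mixed_diff_bounded; intros Hcd Hde.
  rewrite (mixed_diff_split_y F a b c d e).
  eapply Rle_trans; [apply Rabs_triang | lra].
Qed.

Lemma mixed_diff_bounded_of_cells (s t : Z -> R) (F : R -> R -> R) (K : R) :
  grid_seq s -> grid_seq t ->
  (forall i j a b c d, s i <= a -> a <= b -> b <= s (i + 1)%Z ->
     t j <= c -> c <= d -> d <= t (j + 1)%Z -> mixed_diff_bounded F K a b c d) ->
  forall a b c d, a <= b -> c <= d -> mixed_diff_bounded F K a b c d.
Proof.
  intros Hs Ht Hcells a b c d Hab Hcd.
  revert c d Hcd.
  apply (grid_subdivision_ind s (fun a b => forall c d, c <= d -> mixed_diff_bounded F K a b c d));
    trivial.
  - intros a1 b1 e1 _ _ H1 H2 c d Hcd.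
    apply mixed_diff_bounded_concat_x with b1; auto.
  - intros i a1 b1 Ha1 Hab1 Hb1.
    apply (grid_subdivision_ind t (fun c d => mixed_diff_bounded F K a1 b1 c d)); trivial.
    + intros c d e _ _. apply mixed_diff_bounded_concat_y.
    + intros j c d. now apply (Hcells i j).
Qed.

Lemma Rabs_mixed_diff_bounded (F : R -> R -> R) (K : R) :
  (forall a b c d, a <= b -> c <= d -> mixed_diff_bounded F K a b c d) ->
  forall a b c d,
    Rabs (mixed_diff F a b c d) <= K * (Rabs (a - b) * Rabs (c - d)).
Proof.
  unfold mixed_diff_bounded; intros HF a b c d.
  destruct (Rle_dec a b), (Rle_dec c d).
  - rewrite (Rabs_minus_sym a), (Rabs_minus_sym c),
      (Rabs_pos_eq (b - a)), (Rabs_pos_eq (d - c)) by lra.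
    auto.
  - rewrite <- Rabs_Ropp, <- mixed_diff_swap_y, (Rabs_minus_sym a),
      (Rabs_pos_eq (b - a)), (Rabs_pos_eq (c - d)) by lra.
    apply HF; lra.
  - rewrite <- Rabs_Ropp, <- mixed_diff_swap_x, (Rabs_minus_sym c),
      (Rabs_pos_eq (a - b)), (Rabs_pos_eq (d - c)) by lra.
    apply HF; lra.
  - rewrite <- (Ropp_involutive (mixed_diff F a b c d)), <- mixed_diff_swap_x,
      <- mixed_diff_swap_y, (Rabs_pos_eq (a - b)), (Rabs_pos_eq (c - d)) by lra.
    apply HF; lra.
Qed.

Lemma Rabs_div_le_of_mul (x y K : R) : y <> 0 -> Rabs x <= K * Rabs y -> Rabs (x / y) <= K.
Proof.
  intros Hy Hx.
  assert (Hpos : 0 < Rabs y) by now apply Rabs_pos_lt.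
  unfold Rdiv. rewrite Rabs_mult, Rabs_inv.
  apply Rmult_le_reg_r with (Rabs y); trivial.
  rewrite Rmult_assoc, Rinv_l by lra. lra.
Qed.

Lemma coons_cell_mixed_diff (s t : Z -> R) (N : net) (i j : Z) (k : nat) (a b c d : R) :
  s i <> s (i + 1)%Z -> t j <> t (j + 1)%Z ->
  mixed_diff (fun x y => coons_cell s t N i j x y k) a b c d
  = (b - a) * (d - c) *
    (divdiff N (s i) (s (i + 1)%Z) c d k + divdiff N a b (t j) (t (j + 1)%Z) k
     - divdiff N (s i) (s (i + 1)%Z) (t j) (t (j + 1)%Z) k).
Proof.
  intros Hi Hj.
  destruct (Req_dec a b) as [<- | Hab].
  { unfold mixed_diff; ring. }
  destruct (Req_dec c d) as [<- | Hcd].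
  { unfold mixed_diff; ring. }
  unfold mixed_diff, coons_cell, divdiff; cbv zeta.
  field; repeat split; lra.
Qed.

Lemma Rabs_add_sub_le_3 (x y z L : R) :
  Rabs x <= L -> Rabs y <= L -> Rabs z <= L -> Rabs (x + y - z) <= 3 * L.
Proof.
  intros Hx Hy Hz. unfold Rminus.
  eapply Rle_trans; [apply Rabs_triang |].
  eapply Rle_trans; [apply Rplus_le_compat_r, Rabs_triang |].
  rewrite Rabs_Ropp. lra.
Qed.

Lemma coons_cell_mixed_diff_bounded (m : nat) (s t : Z -> R) (N : net) (L : R)
    (i j : Z) (k : nat) (a b c d : R) :
  (k < m)%nat -> s i < s (i + 1)%Z -> t j < t (j + 1)%Z ->
  BMSDD_net m s t N L ->
  a <= b -> c <= d ->
  mixed_diff_bounded (fun x y => coons_cell s t N i j x y k) (3 * L) a b c d.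
Proof.
  intros Hk Hi Hj HN Hab Hcd.
  unfold mixed_diff_bounded.
  rewrite coons_cell_mixed_diff by lra.
  rewrite Rabs_mult, (Rabs_pos_eq ((b - a) * (d - c))) by (apply Rmult_le_pos; lra).
  rewrite (Rmult_comm (3 * L)).
  destruct (Req_dec a b) as [<- | Hab']; [rewrite Rminus_diag, !Rmult_0_l; lra |].
  destruct (Req_dec c d) as [<- | Hcd']; [rewrite Rminus_diag, Rmult_0_r, !Rmult_0_l; lra |].
  apply Rmult_le_compat_l; [apply Rmult_le_pos; lra |].
  apply Rabs_add_sub_le_3.
  - apply HN; unfold onT; eauto; lra.
  - apply HN; unfold onT; eauto; lra.
  - apply HN; unfold onT; eauto; lra.
Qed.

Theorem theorem3 (m : nat) (s t : Z -> R) (N : net) (L : R) (G : net) :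
  grid_seq s -> grid_seq t ->
  net_C0 m s t N ->
  BMSDD_net m s t N L ->
  is_coons_patch s t N G ->
  BMSDD_R2 m G (3 * L).
Proof.
  intros Hs Ht _ HN HG s1 s2 t1 t2 Hs12 Ht12 k Hk.
  assert (Hbound : forall a b c d, a <= b -> c <= d ->
            mixed_diff_bounded (fun x y => G x y k) (3 * L) a b c d).
  { apply (mixed_diff_bounded_of_cells s t); trivial.
    intros i j a b c d Hia Hab Hbi Hjc Hcd Hdj.
    assert (Hcell : mixed_diff (fun x y => G x y k) a b c d
                    = mixed_diff (fun x y => coons_cell s t N i j x y k) a b c d)
      by (unfold mixed_diff; rewrite !(HG i j) by lra; reflexivity).
    unfold mixed_diff_bounded; rewrite Hcell.
    apply (coons_cell_mixed_diff_bounded m); trivial.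
    - apply (proj1 Hs); lia.
    - apply (proj1 Ht); lia. }
  rewrite divdiff_mixed_diff.
  apply Rabs_div_le_of_mul.
  - apply Rmult_integral_contrapositive; split; lra.
  - rewrite Rabs_mult. now apply Rabs_mixed_diff_bounded.
Qed.
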